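(* Let $A$ be an evolution algebra over a commutative ring $R$ with finite basis $x_1,\dots,x_N$ and structure coefficient matrix $C=(c_{ki})_{N\times N}$. For $\alpha=(a_1,\dots,a_N)\in R^N$ let $C_\alpha=(a_jc_{kj})_{k,j}$ (the $j$-th column of $C$ multiplied by $a_j$). Then $A$ is nil if and only if for every $\alpha\in R^N$ there exists a positive integer $k_\alpha$ such that $C_\alpha^{k_\alpha}\alpha^T=0$.
   Context: An evolution algebra over a commutative ring $R$ is a free $R$-module $A$ with basis $\{x_i\}$ equipped with the $R$-bilinear multiplication determined by $x_ix_j=0$ for $i\ne j$ and $x_i^2=\sum_k c_{ki}x_k$ with $c_{ki}\in R$. The structure coefficient matrix $C$ has $(k,i)$ entry $c_{ki}$. Principal powers: $a^1=a$, $a^n=a^{n-1}a$. $A$ is nil if for every $a\in A$ there is $n\in\mathbb{N}$ with $a^n=0$. *)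

From HB Require Import structures.
From mathcomp Require Import all_boot all_order all_algebra.
Set Implicit Arguments. Unset Strict Implicit. Unset Printing Implicit Defensive.
Import GRing.Theory.
Local Open Scope ring_scope.

(* Evolution algebra over R with basis x_0..x_(N-1): elements are coordinate
   column vectors; structure matrix C with C k i = c_{ki}, x_i^2 = sum_k c_{ki} x_k,
   x_i x_j = 0 for i <> j. *)
Definition evo_mul (R : comPzRingType) (N : nat) (C : 'M[R]_N) (a b : 'cV[R]_N)
  : 'cV[R]_N := \col_k \sum_(i < N) a i 0 * b i 0 * C k i.

(* evo_ppow_aux C a n = a^(n+1) (principal power): a^1 = a, a^(m+1) = a^m a. *)
Fixpoint evo_ppow_aux (R : comPzRingType) (N : nat) (C : 'M[R]_N) (a : 'cV[R]_N)
  (n : nat) : 'cV[R]_N :=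
  match n with
  | O => a
  | S m => evo_mul C (evo_ppow_aux C a m) a
  end.

Definition evo_ppow (R : comPzRingType) (N : nat) (C : 'M[R]_N) (a : 'cV[R]_N)
  (n : nat) : 'cV[R]_N := evo_ppow_aux C a n.-1.

Definition evo_nil (R : comPzRingType) (N : nat) (C : 'M[R]_N) : Prop :=
  forall a : 'cV[R]_N, exists n : nat, (0 < n)%N /\ evo_ppow C a n = 0.

Definition C_alpha (R : comPzRingType) (N : nat) (C : 'M[R]_N) (alpha : 'cV[R]_N)
  : 'M[R]_N := \matrix_(k, j) (alpha j 0 * C k j).

From HB Require Import structures.
From mathcomp Require Import all_boot all_order all_algebra.
Set Implicit Arguments. Unset Strict Implicit. Unset Printing Implicit Defensive.
Local Open Scope ring_scope.
Import GRing.Theory.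

(* Right multiplication by a is the linear map C_a, so the principal power
   a^(n+1) is C_a^n a.  Hence a^n = 0 for some n > 0 iff C_a^n a = 0 for some
   n, and shifting n by one shows the positivity constraint on k is harmless. *)

Lemma evo_mulE (R : comPzRingType) (N : nat) (C : 'M[R]_N) (a b : 'cV[R]_N) :
  evo_mul C b a = C_alpha C a *m b.
Proof.
apply/matrixP => k j; rewrite (ord1 j) !mxE.
by apply: eq_bigr => i _; rewrite !mxE [RHS]mulrC mulrA.
Qed.

Lemma evo_ppowSE (R : comPzRingType) (N : nat) (C : 'M[R]_N) (a : 'cV[R]_N)
    (n : nat) :
  evo_ppow C a n.+1 = C_alpha C a ^+ n *m a.
Proof.
rewrite /evo_ppow /=; elim: n => [|n IHn] /=; first by rewrite expr0 mul1mx.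
by rewrite evo_mulE IHn mulmxA [in RHS]exprS.
Qed.

Lemma evo_nilE (R : comPzRingType) (N : nat) (C : 'M[R]_N) :
  evo_nil C <-> forall a : 'cV[R]_N, exists n : nat, C_alpha C a ^+ n *m a = 0.
Proof.
split=> nilC a.
- have [[|n] [//= _]] := nilC a.
  by rewrite evo_ppowSE; exists n.
- by have [n an0] := nilC a; exists n.+1; rewrite evo_ppowSE.
Qed.

Lemma exists_pos_expmx_annihilator (R : pzRingType) (n : nat)
    (M : 'M[R]_n) (v : 'cV[R]_n) :
  (exists k : nat, (0 < k)%N /\ M ^+ k *m v = 0) <->
  (exists k : nat, M ^+ k *m v = 0).
Proof.
split=> [[k [_ Mkv0]] | [k Mkv0]]; first by exists k.
by exists k.+1; rewrite exprS -mulmxA Mkv0 mulmx0.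
Qed.

Theorem theorem2p5 (R : comPzRingType) (N : nat) (C : 'M[R]_N) :
  evo_nil C <->
  (forall alpha : 'cV[R]_N, exists k : nat, (0 < k)%N /\ (C_alpha C alpha) ^+ k *m alpha = 0).
Proof.
split=> [/evo_nilE nilC alpha | nilC].
- exact/exists_pos_expmx_annihilator.
- by apply/evo_nilE => alpha; apply/exists_pos_expmx_annihilator.
Qed.
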